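(* Let $s\ge 1$ be a fixed integer. Consider a sequence of $(s+1)$-tuples of integers $2\le n_0\le n_1\le\dots\le n_s$ (indexed so that $n_s\to\infty$) such that $n_0=(\log n_s)^{\alpha}$ with $\alpha\ge 2\sqrt{\frac{\log n_s}{\log\log n_s}}$. For every $0\le i\le s-1$ let $k_i=\frac{\log n_s}{\log n_i}$, and let $x_0$ be the unique root of the equation $sx-1-\sum_{j=0}^{s-1}x^{\frac{k_j-1}{k_j}}=0$ in the interval $[1,\infty)$. Then $$ch(K_{n_0,\dots,n_s})\ge(1-o(1))\frac{\log n_s}{\log x_0}$$ as $n_s\to\infty$.
   Context: All logarithms are to base 2. For a graph $G=(V,E)$, the choice number $ch(G)$ is the minimum integer $k$ such that for every assignment of a list $S(v)$ of at least $k$ colors to each vertex $v\in V$, there is a proper vertex coloring of $G$ assigning to each vertex $v$ a color from $S(v)$. $K_{n_0,\dots,n_s}$ denotes the complete $(s+1)$-partite graph with parts of sizes $n_0,\dots,n_s$. *)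

From mathcomp Require Import all_boot.
From Stdlib Require Import Reals ClassicalEpsilon.

Set Implicit Arguments.
Unset Strict Implicit.
Unset Printing Implicit Defensive.

(* Colours
   are natural numbers (lists are finite, so this is no loss of generality). *)
Definition choosable (V : finType) (e : rel V) (k : nat) : Prop :=
  forall S : V -> seq nat,
    (forall v, k <= size (undup (S v))) ->
    exists c : V -> nat,
      (forall v, c v \in S v) /\ (forall u v, e u v -> c u != c v).

Definition choosableb (V : finType) (e : rel V) (k : nat) : bool :=
  if excluded_middle_informative (choosable e k) then true else false.

Definition choice_number (V : finType) (e : rel V) : nat :=
  match excluded_middle_informative (exists k, choosableb e k) with
  | left h => ex_minn h
  | right _ => 0
  end.

(* The complete (s+1)-partite graph K_{n 0, ..., n s}: vertices are pairs
   (i, a) with i < s+1 and a < n i; two vertices are adjacent iff they lie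
   in different parts. *)
Definition Kvert (s : nat) (n : nat -> nat) : finType :=
  {i : 'I_s.+1 & 'I_(n i)}.

Definition Kadj (s : nat) (n : nat -> nat) : rel (Kvert s n) :=
  fun u v => tag u != tag v.

Definition chK (s : nat) (n : nat -> nat) : nat :=
  choice_number (@Kadj s n).

Definition log2 (x : R) : R := (ln x / ln 2)%R.

Fixpoint Rsum (f : nat -> R) (m : nat) : R :=
  match m with
  | O => 0%R
  | S m' => (Rsum f m' + f m')%R
  end.

From mathcomp Require Import all_boot.
From Stdlib Require Import Reals ZArith Lra Classical ClassicalEpsilon.

Set Implicit Arguments.
Unset Strict Implicit.
Unset Printing Implicit Defensive.

Lemma exists_notin_undup (T : eqType) (a b : seq T) :
  size b < size (undup a) -> exists2 y, y \in a & y \notin b.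
Proof.
move=> lt_ba; have /hasP[y ya /= yb] : has [predC b] a.
  apply/hasPn => sub.
  have sub' : {subset undup a <= b}.
    by move=> y; rewrite mem_undup => /sub /negPn.
  by move: (uniq_leq_size (undup_uniq a) sub'); rewrite leqNgt lt_ba.
by exists y.
Qed.

Section ChoiceNumber.

Variables (V : finType) (e : rel V).
Hypothesis e_irr : forall u v, e u v -> u != v.

Lemma choosable_mono j k : j <= k -> choosable e j -> choosable e k.
Proof. by move=> le_jk ch S szS; apply: ch => v; apply: leq_trans le_jk (szS v). Qed.

(* Greedy choice from lists of length at least size r, ignoring the edges. *)
Lemma injective_choice_from_lists (S : V -> seq nat) (r : seq V) :
  (forall v, size r <= size (undup (S v))) ->
  exists c : V -> nat, (forall v, v \in r -> c v \in S v) /\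
    (forall u v, u \in r -> v \in r -> u != v -> c u != c v).
Proof.
elim: r => [|x r IH] szS; first by exists (fun=> 0).
have [|c [cS c_inj]] := IH; first by move=> v; apply: leq_trans (szS v).
have [y yS ync] : exists2 y, y \in S x & y \notin map c r.
  by apply: exists_notin_undup; rewrite size_map; apply: szS.
exists (fun v => if v == x then y else c v); split.
  by move=> v; rewrite inE; case: eqP => [-> //|_ /= /cS].
move=> u v; rewrite !inE.
case: (eqVneq u x) => [->|ux]; case: (eqVneq v x) => [->|vx] //= ur vr uv.
- by apply: contra ync => /eqP ->; rewrite map_f.
- by apply: contra ync => /eqP <-; rewrite map_f.
- exact: c_inj.
Qed.

Lemma choosable_card : choosable e #|V|.
Proof.
move=> S szS; have [|c [cS c_inj]] := @injective_choice_from_lists S (enum V).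
  by move=> v; rewrite -cardE.
by exists c; split=> [v|u v /e_irr]; [apply: cS | apply: c_inj]; rewrite ?mem_enum.
Qed.

Lemma choice_number_gt k : ~ choosable e k -> k < choice_number e.
Proof.
rewrite /choice_number /choosableb => not_ch.
case: excluded_middle_informative => [ex_ch|]; last first.
  case; exists #|V|; case: excluded_middle_informative => // [[]].
  exact: choosable_card.
case: ex_minnP => m + _; case: excluded_middle_informative => // ch_m _.
by rewrite ltnNge; apply: contra_notN not_ch => /choosable_mono; apply.
Qed.

End ChoiceNumber.

Lemma union_bound (T I : finType) (A : pred T) (B : I -> pred T) :
  (forall x, A x -> exists i, B i x) -> #|A| <= \sum_i #|B i|.
Proof.
move=> AB; rewrite -sum1_card (eq_bigr (fun i => \sum_(x in B i) 1)).
  rewrite (exchange_big_dep predT) //= big_mkcond; apply: leq_sum => x _.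
  by case: ifP => // /AB[i Bi]; rewrite (bigD1 i).
by move=> i _; rewrite sum1_card.
Qed.

Lemma card_family_prod (aT rT : finType) (F : aT -> pred rT) :
  #|[pred f : {ffun aT -> rT} | [forall x, F x (f x)]]| = \prod_x #|F x|.
Proof.
have := card_family (rT := fun=> rT) F.
rewrite foldrE big_map big_enum /= => <-.
by apply: eq_card => f; rewrite !inE.
Qed.

Lemma card_inj_ffuns_meet (aT rT : finType) (A : {pred rT}) :
  #|[pred g : {ffun aT -> rT} | injectiveb g && [exists x, g x \in A]]|
  + (#|rT| - #|A|) ^_ #|aT| = #|rT| ^_ #|aT|.
Proof.
have <- : #|[predC A]| = #|rT| - #|A| by rewrite -(cardC A) addKn.
rewrite -card_inj_ffuns_on -card_inj_ffuns.
rewrite -(cardID [pred g : {ffun aT -> rT} | [exists x, g x \in A]] [set f : {ffun aT -> rT} | injectiveb f]).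
congr (_ + _); apply: eq_card => g; rewrite !inE //.
by rewrite negb_exists; congr (_ && _); apply: eq_forallb => x; rewrite inE.
Qed.

Lemma INR_muln a b : INR (a * b) = (INR a * INR b)%R.
Proof. exact: mult_INR. Qed.

Lemma INR_expn a b : INR (expn a b) = (INR a ^ b)%R.
Proof. by elim: b => [|b IH]; rewrite ?expn0 // expnS INR_muln IH. Qed.

Lemma exp_le x y : (x <= y)%R -> (exp x <= exp y)%R.
Proof. by case=> [/exp_increasing/Rlt_le | ->]; last apply: Rle_refl. Qed.

Lemma exp_pow_nat a m : (exp a ^ m = exp (INR m * a))%R.
Proof.
elim: m => [|m IH]; first by rewrite /= Rmult_0_l exp_0.
by rewrite -tech_pow_Rmult IH -exp_plus S_INR; f_equal; ring.
Qed.

(* (1 - Q/P)^m <= exp (-m Q/P), from 1 + x <= exp x. *)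
Lemma pow_sub_le_exp (P Q K : R) (m : nat) :
  (0 < P)%R -> (0 <= Q <= P)%R -> (K * P <= INR m * Q)%R ->
  ((P - Q) ^ m <= P ^ m * exp (- K))%R.
Proof.
move=> P_gt0 Q_bd KPQ.
have PQ_le : (P - Q <= P * exp (- (Q / P)))%R.
  have := exp_ineq1_le (- (Q / P)).
  have -> : (P - Q = P * (1 + - (Q / P)))%R by field; lra.
  by apply: Rmult_le_compat_l; lra.
apply: Rle_trans (pow_incr _ _ m _) _; first by split; [lra | exact: PQ_le].
rewrite Rpow_mult_distr exp_pow_nat.
apply: Rmult_le_compat_l; first by apply: pow_le; lra.
apply: exp_le; suff : (K <= INR m * (Q / P))%R by lra.
apply: (Rmult_le_reg_r P) => //.
by have -> : (INR m * (Q / P) * P = INR m * Q)%R by field; lra.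
Qed.

Lemma INR_sum_le (I : finType) (F : I -> nat) (b : R) :
  (forall i, INR (F i) <= b)%R -> (INR (\sum_i F i) <= INR #|I| * b)%R.
Proof.
move=> Fb; rewrite cardE -big_enum /=.
elim: (enum I) => [|x r IH]; first by rewrite big_nil /=; lra.
by rewrite big_cons plus_INR [size _]/= S_INR; have := Fb x; lra.
Qed.

Section Multipartite.

Variables (s : nat) (n : nat -> nat).
Local Notation V := (Kvert s n).
Local Notation Kadj := (@Kadj s n).

Lemma chK_gt k : ~ choosable Kadj k -> k < chK s n.
Proof. by apply: choice_number_gt => u v; apply: contraTneq => ->; rewrite /Kadj negbK. Qed.

Lemma card_part (i : 'I_s.+1) : #|[pred v : V | tag v == i]| = n i.
Proof.
have Tagged_inj := @eq_from_Tagged _ (fun i : 'I_s.+1 => 'I_(n i)) i.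
rewrite -[RHS](card_ord (n i)) -(card_image Tagged_inj).
apply: eq_card => -[j a]; rewrite inE; apply/eqP/imageP => [/= <-|[b _ ->] //].
by exists a.
Qed.

(* A proper colouring from the lists L assigns to every colour the part in which it is used. *)
Lemma Kadj_not_choosable k c (L : V -> {ffun 'I_k -> 'I_c}) :
  (forall v, injective (L v)) ->
  (forall f : {ffun 'I_c -> 'I_s.+1}, exists v, forall j, f (L v j) != tag v) ->
  ~ choosable Kadj k.
Proof.
move=> L_inj L_avoid ch.
have [v|col [colL col_pr]] := ch (fun v => map val (codom (L v))).
  have uniq_L : uniq (map val (codom (L v))).
    by rewrite map_inj_uniq; [apply/injectiveP/L_inj | apply: val_inj].
  by rewrite undup_id // size_map size_codom card_ord.
pose f : {ffun 'I_c -> 'I_s.+1} := [ffun j : 'I_c => if [pick u | col u == j] is Some u then tag u else ord0].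
have [v v_avoid] := L_avoid f.
have /mapP[_ /codomP[a ->] col_v] := colL v.
move: (v_avoid a); rewrite /f ffunE; case: pickP => [u /eqP col_u | /(_ v)].
  by move/col_pr; rewrite col_u col_v eqxx.
by rewrite col_v eqxx.
Qed.

Section ListSystems.

Variables (k c : nat).
Local Notation lists := {ffun V -> {ffun 'I_k -> 'I_c}}.

Definition lists_meeting (f : {ffun 'I_c -> 'I_s.+1}) := [pred L : lists |
  [forall v, injectiveb (L v) && [exists j, f (L v j) == tag v]]].

Lemma card_lists_meeting f :
  #|lists_meeting f| = \prod_(v : V) (c ^_ k - (c - #|[pred j | f j == tag v]|) ^_ k).
Proof.
pose F (v : V) := [pred g : {ffun 'I_k -> 'I_c} |
  injectiveb g && [exists j, g j \in [pred j | f j == tag v]]].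
rewrite (@eq_card _ _ [pred L : lists | [forall v, F v (L v)]]) => [|L]; last first.
  by rewrite !inE.
rewrite (card_family_prod F); apply: eq_bigr => v _.
have := card_inj_ffuns_meet 'I_k [pred j | f j == tag v].
by rewrite !card_ord => <-; rewrite addnK.
Qed.

Hypothesis le_kc : k <= c.

Lemma card_lists_meeting_le (f : {ffun 'I_c -> 'I_s.+1}) (i : 'I_s.+1) (K : R) :
  (K * INR (c ^_ k) <= INR (n i) * INR ((c - #|[pred j | f j == i]|) ^_ k))%R ->
  (INR #|lists_meeting f| <= INR (c ^_ k) ^ #|V| * exp (- K))%R.
Proof.
set P := c ^_ k; set Q := (c - #|[pred j | f j == i]|) ^_ k => KPQ.
have P_gt0 : (0 < INR P)%R by apply/lt_0_INR/ltP; rewrite ffact_gt0.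
have le_QP : Q <= P.
  have := card_inj_ffuns_meet 'I_k [pred j | f j == i].
  by rewrite !card_ord -/P -/Q => <-; apply: leq_addl.
have card_V : #|V| = n i + #|[pred v : V | tag v != i]|.
  rewrite -(card_part i) -(cardC [pred v : V | tag v == i]).
  by congr (_ + _); apply: eq_card => v; rewrite !inE.
have part_i : \prod_(v : V | tag v == i) (P - (c - #|[pred j | f j == tag v]|) ^_ k)
    = expn (P - Q) (n i).
  by rewrite -(card_part i) -prod_nat_const; apply: eq_bigr => v /eqP ->.
have other_parts : \prod_(v : V | tag v != i) (P - (c - #|[pred j | f j == tag v]|) ^_ k)
    <= expn P #|[pred v : V | tag v != i]|.
  by rewrite -prod_nat_const; apply: leq_prod => v _; apply: leq_subr.
rewrite card_lists_meeting (bigID [pred v : V | tag v == i]) /= part_i INR_muln.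
rewrite card_V pow_add !INR_expn minus_INR; last exact/leP.
have Q_bd : (0 <= INR Q <= INR P)%R by split; [apply: pos_INR | apply/le_INR/leP].
have := Rmult_le_compat _ _ _ _ _ (pos_INR _) (pow_sub_le_exp P_gt0 Q_bd KPQ)
  (le_INR _ _ (elimT leP other_parts)).
rewrite INR_expn -/P => le_prod.
apply: Rle_trans (le_prod _) _; first by apply: pow_le; lra.
by right; ring.
Qed.

Lemma exists_avoiding_lists (K : R) :
  (forall f : {ffun 'I_c -> 'I_s.+1}, exists i : 'I_s.+1,
      K * INR (c ^_ k) <= INR (n i) * INR ((c - #|[pred j | f j == i]|) ^_ k))%R ->
  (INR s.+1 ^ c * exp (- K) < 1)%R ->
  exists L : V -> {ffun 'I_k -> 'I_c},
    (forall v, injective (L v)) /\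
    (forall f : {ffun 'I_c -> 'I_s.+1}, exists v, forall j, f (L v j) != tag v).
Proof.
move=> few_meet small.
pose injective_lists := [pred L : lists | [forall v, injectiveb (L v)]].
suff [L /forallP L_inj L_avoid] :
    exists2 L, L \in injective_lists & forall f, L \notin lists_meeting f.
  exists L; split=> [v|f]; first exact/injectiveP.
  move: (L_avoid f); rewrite inE negb_forall => /existsP[v].
  by rewrite L_inj negb_exists => /forallP avoid; exists v.
apply: NNPP => no_L.
have cover L : injective_lists L -> exists f, lists_meeting f L.
  move=> L_inj; apply: NNPP => no_f; apply: no_L; exists L => // f.
  by apply/negP => meet; apply: no_f; exists f.
have card_inj : #|injective_lists| = expn (c ^_ k) #|V|.
  rewrite (card_family_prod (fun=> [pred g : {ffun 'I_k -> 'I_c} | injectiveb g])).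
  rewrite prod_nat_const -[c in c ^_ k](card_ord c) -[k in _ ^_ k](card_ord k).
  by rewrite -card_inj_ffuns; congr (expn _ _); apply: eq_card => g; rewrite !inE.
have P_gt0 : (0 < INR (expn (c ^_ k) #|V|))%R.
  by apply/lt_0_INR/ltP; rewrite expn_gt0 ffact_gt0 le_kc.
have meeting_le f :
    (INR #|lists_meeting f| <= INR (expn (c ^_ k) #|V|) * exp (- K))%R.
  by have [i /card_lists_meeting_le] := few_meet f; rewrite INR_expn.
have := Rle_trans _ _ _ (le_INR _ _ (elimT leP (union_bound cover)))
  (INR_sum_le meeting_le).
rewrite card_inj card_ffun !card_ord (INR_expn s.+1 c).
have := Rmult_lt_compat_l _ _ _ P_gt0 small.
lra.
Qed.

End ListSystems.

End Multipartite.

Lemma Rsum_ext (f g : nat -> R) (m : nat) :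
  (forall i : nat, (i < m)%nat -> f i = g i) -> Rsum f m = Rsum g m.
Proof. by elim: m => //= m IH fg; rewrite IH ?fg // => i /ltnW; apply: fg. Qed.

Lemma Rsum_le (f g : nat -> R) (m : nat) :
  (forall i : nat, (i < m)%nat -> f i <= g i)%R -> (Rsum f m <= Rsum g m)%R.
Proof.
elim: m => [|m IH] fg /=; first lra.
by have := fg m (ltnSn m); have := IH (fun i lt_im => fg i (ltnW lt_im)); lra.
Qed.

Lemma Rsum_lt (f g : nat -> R) (m : nat) : (0 < m)%nat ->
  (forall i : nat, (i < m)%nat -> f i < g i)%R -> (Rsum f m < Rsum g m)%R.
Proof.
case: m => // m _ fg /=; have := fg m (ltnSn m).
by have := @Rsum_le f g m (fun i lt_im => Rlt_le _ _ (fg i (ltnW lt_im))); lra.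
Qed.

Lemma Rsum_plus (f g : nat -> R) (m : nat) : Rsum (fun i => f i + g i)%R m = (Rsum f m + Rsum g m)%R.
Proof. by elim: m => [|m IH] /=; rewrite ?IH; lra. Qed.

Lemma Rsum_scal (a : R) (f : nat -> R) m : Rsum (fun i => a * f i)%R m = (a * Rsum f m)%R.
Proof. by elim: m => [|m IH] /=; rewrite ?IH; lra. Qed.

Lemma Rsum_const (a : R) m : Rsum (fun=> a) m = (INR m * a)%R.
Proof. by elim: m => [|m IH]; rewrite ?[Rsum _ _]/= ?IH ?S_INR /=; lra. Qed.

Lemma Rsum_INR (F : nat -> nat) m : Rsum (fun i => INR (F i)) m = INR (\sum_(i < m) F i).
Proof. by elim: m => [|m IH]; rewrite ?big_ord0 // big_ord_recr /= plus_INR IH. Qed.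

Lemma expn_sub_le_ffact x k : expn (x - k) k <= x ^_ k.
Proof.
rewrite ffact_prod -[k in expn _ k]card_ord -prod_nat_const.
by apply: leq_prod => i _; apply/leq_sub2l/ltnW.
Qed.

Lemma ffact_le_expn x k : x ^_ k <= expn x k.
Proof.
rewrite ffact_prod -[k in expn _ k]card_ord -prod_nat_const.
by apply: leq_prod => i _; apply: leq_subr.
Qed.

Lemma sum_card_preim c s (f : {ffun 'I_c -> 'I_s.+1}) :
  \sum_(i < s.+1) #|[pred j | f j == i]| = c.
Proof.
rewrite -[RHS]card_ord -sum1_card (partition_big f xpredT) //=.
by apply: eq_bigr => i _; rewrite -sum1_card.
Qed.

(* (c tau)^k <= (c - a - k)^k, and c^_k <= c^k *)
Lemma pow_mul_ffact_le (c a k : nat) (tau : R) : (0 <= tau)%R ->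
  (INR k + INR c * tau <= INR c - INR a)%R ->
  (tau ^ k * INR (c ^_ k) <= INR ((c - a) ^_ k))%R.
Proof.
move=> tau_ge0 room.
have le_kac : (k + a <= c)%nat.
  apply/leP/INR_le; rewrite plus_INR.
  by have := Rmult_le_pos _ _ (pos_INR c) tau_ge0; lra.
have sub_INR : INR (c - a - k) = (INR c - INR a - INR k)%R.
  by rewrite -subnDA minus_INR ?plus_INR 1?addnC; [ring | apply/leP].
apply: Rle_trans (_ : (INR c * tau) ^ k <= _)%R.
  rewrite Rpow_mult_distr Rmult_comm; apply: Rmult_le_compat_r; first exact: pow_le.
  by rewrite -INR_expn; apply/le_INR/leP/ffact_le_expn.
apply: Rle_trans (le_INR _ _ (elimT leP (expn_sub_le_ffact (c - a) k))).
rewrite INR_expn sub_INR; apply: pow_incr.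
by split; [apply: Rmult_le_pos; [apply: pos_INR |] | lra].
Qed.

Lemma exists_part_with_room c k s (tau : nat -> R) (f : {ffun 'I_c -> 'I_s.+1}) :
  (INR s.+1 * INR k + INR c * Rsum tau s.+1 <= INR s * INR c)%R ->
  exists i : 'I_s.+1, (INR k + INR c * tau i <= INR c - INR #|[pred j | f j == i]|)%R.
Proof.
move=> budget; apply: NNPP => no_room.
pose a i := #|[pred j | f j == inord i :> 'I_s.+1]|.
have sum_a : Rsum (fun i => INR (a i)) s.+1 = INR c.
  rewrite Rsum_INR -(sum_card_preim f); congr INR.
  by apply: eq_bigr => i _; rewrite /a inord_val.
have : (Rsum (fun i => INR c + -1 * INR (a i)) s.+1
        < Rsum (fun i => INR k + INR c * tau i) s.+1)%R.
  apply: Rsum_lt => // i lt_is; apply: Rnot_le_lt => room; apply: no_room.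
  by exists (inord i); rewrite inordK //; rewrite /a in room; lra.
rewrite !Rsum_plus !Rsum_scal !Rsum_const sum_a S_INR.
by move: budget; rewrite S_INR; nra.
Qed.

Lemma pigeonhole_part s c k (n : nat -> nat) (K : R) (tau : nat -> R) :
  (forall i, (i <= s)%nat -> 0 <= tau i /\ K <= INR (n i) * tau i ^ k)%R ->
  (INR s.+1 * INR k + INR c * Rsum tau s.+1 <= INR s * INR c)%R ->
  forall f : {ffun 'I_c -> 'I_s.+1}, exists i : 'I_s.+1,
    (K * INR (c ^_ k) <= INR (n i) * INR ((c - #|[pred j | f j == i]|) ^_ k))%R.
Proof.
move=> tau_bd budget f; have [i room] := exists_part_with_room f budget.
have [tau_ge0 K_le] := tau_bd i (ltn_ord i); exists i.
apply: Rle_trans (_ : INR (n i) * tau i ^ k * INR (c ^_ k) <= _)%R.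
  by apply: Rmult_le_compat_r => //; apply: pos_INR.
rewrite Rmult_assoc; apply: Rmult_le_compat_l; first exact: pos_INR.
exact: pow_mul_ffact_le.
Qed.

Lemma chK_gt_of_weights s (n : nat -> nat) k c (K : R) (tau : nat -> R) :
  (k <= c)%nat ->
  (INR s.+1 ^ c * exp (- K) < 1)%R ->
  (forall i, (i <= s)%nat -> 0 <= tau i /\ K <= INR (n i) * tau i ^ k)%R ->
  (INR s.+1 * INR k + INR c * Rsum tau s.+1 <= INR s * INR c)%R ->
  (k < chK s n)%nat.
Proof.
move=> le_kc small tau_bd budget.
have [L [L_inj L_avoid]] := exists_avoiding_lists le_kc (pigeonhole_part tau_bd budget) small.
exact/chK_gt/(Kadj_not_choosable L_inj L_avoid).
Qed.

Local Open Scope R_scope.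

Lemma ln_le x y : 0 < x -> x <= y -> ln x <= ln y.
Proof. by move=> x_gt0 [/(ln_increasing _ _ x_gt0)/Rlt_le | ->]; last apply: Rle_refl. Qed.

Lemma ln_le_sub1 x : 0 < x -> ln x <= x - 1.
Proof. by move=> x_gt0; have := exp_ineq1_le (ln x); rewrite exp_ln //; lra. Qed.

Lemma exp_neg_mul_succ_le1 w : exp (- w) * (1 + w) <= 1.
Proof.
rewrite exp_Ropp.
apply: (Rmult_le_reg_l (exp w)); first exact: exp_pos.
rewrite -Rmult_assoc Rinv_r ?Rmult_1_r ?Rmult_1_l; last exact: exp_neq_0.
exact: exp_ineq1_le.
Qed.

Lemma exp_le_1_add_2x u : 0 <= u <= 1/2 -> exp u <= 1 + 2 * u.
Proof.
move=> u_bd; have := exp_neg_mul_succ_le1 (- u); rewrite Ropp_involutive.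
by have := exp_pos u; nra.
Qed.

Section RootBounds.

Variables (s : nat) (Lam x0 : R) (lam : nat -> R).
Hypotheses (s_ge1 : (1 <= s)%nat) (Lam_gt0 : 0 < Lam) (x0_ge1 : 1 <= x0).
Hypothesis x0_root : INR s = / x0 + Rsum (fun j => exp (- (ln x0 * lam j / Lam))) s.

Lemma x0_lb : (forall j, (j < s)%nat -> lam j <= Lam) -> INR s + 1 <= INR s * x0.
Proof.
move=> lam_le; have x0_gt0 : 0 < x0 by lra.
have ln_x0_ge0 : 0 <= ln x0 by rewrite -ln_1; apply: ln_le; lra.
have : Rsum (fun=> / x0) s <= Rsum (fun j => exp (- (ln x0 * lam j / Lam))) s.
  apply: Rsum_le => j lt_js.
  rewrite -[/ x0](exp_ln _ (Rinv_0_lt_compat _ x0_gt0)) ln_Rinv //.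
  apply/exp_le/Ropp_le_contravar.
  apply: (Rmult_le_reg_r Lam) => //; rewrite /Rdiv Rmult_assoc Rinv_l; last lra.
  by rewrite Rmult_1_r; apply: Rmult_le_compat_l => //; apply: lam_le.
rewrite Rsum_const => le_sum.
have : (INR s + 1) * / x0 <= INR s by lra.
move/(Rmult_le_compat_r x0 _ _ (Rlt_le _ _ x0_gt0)).
by rewrite Rmult_assoc Rinv_l ?Rmult_1_r; lra.
Qed.

Lemma x0_ub (K0 l : R) : 1 <= K0 -> 0 < l <= ln x0 ->
  (forall j, (j < s)%nat -> Lam <= K0 * lam j) ->
  x0 <= (/ (INR s * l) + 1) * K0.
Proof.
move=> K0_ge1 l_bd lam_ge; have root := x0_root; set y := ln x0 in l_bd root.
have s_ge1R : 1 <= INR s by apply: (le_INR 1); apply/leP.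
pose w := y / K0.
have w_ge0 : 0 <= w by apply: Rmult_le_pos; [lra | apply/Rlt_le/Rinv_0_lt_compat; lra].
have : Rsum (fun j => exp (- (y * lam j / Lam))) s <= Rsum (fun=> exp (- w)) s.
  apply: Rsum_le => j lt_js; apply/exp_le/Ropp_le_contravar.
  have := lam_ge j lt_js; rewrite /w /Rdiv => le_Lam.
  apply: (Rmult_le_reg_r (K0 * Lam)); first by apply: Rmult_lt_0_compat; lra.
  have -> : y * / K0 * (K0 * Lam) = y * Lam by field; lra.
  have -> : y * lam j * / Lam * (K0 * Lam) = y * (K0 * lam j) by field; lra.
  by apply: Rmult_le_compat_l; lra.
rewrite Rsum_const => le_sum.
have ew := exp_neg_mul_succ_le1 w; have ew_gt0 := exp_pos (- w).
have x0_inv : x0 * / x0 = 1 by field; lra.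
have sx1 : INR s * x0 * (1 - exp (- w)) <= 1.
  have : INR s * (1 - exp (- w)) <= / x0 by lra.
  by move/(Rmult_le_compat_r x0 _ _ ltac:(lra)); rewrite [/ x0 * x0]Rmult_comm x0_inv; lra.
have sxw : INR s * x0 * w <= 1 + w.
  have := Rmult_le_compat_r (1 + w) _ _ ltac:(lra) sx1.
  have : 0 <= INR s * x0 by nra.
  by nra.
have sxy : INR s * x0 * y <= K0 + y.
  have -> : y = w * K0 by rewrite /w; field; lra.
  by nra.
have y_l : 1 <= y / l.
  by apply: (Rmult_le_reg_r l); [lra | rewrite /Rdiv Rmult_assoc Rinv_l; lra].
apply: (Rmult_le_reg_r (INR s * y)); first by nra.
have -> : (/ (INR s * l) + 1) * K0 * (INR s * y) = K0 * (y / l) + K0 * INR s * y.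
  by field; lra.
have K0_yl : K0 * 1 <= K0 * (y / l) by apply: Rmult_le_compat_l; lra.
have K0s : 1 * 1 <= K0 * INR s by apply: Rmult_le_compat; lra.
have : 0 <= (K0 * INR s - 1) * y by apply: Rmult_le_pos; lra.
by nra.
Qed.

End RootBounds.

Lemma budget_arith (s k x0 d u S : R) :
  0 <= s -> 0 < k -> 0 < x0 -> 0 <= S <= s - d / x0 -> 0 <= u <= 1/2 ->
  2 * (s + 1) * x0 <= d * k -> 4 * s * x0 * u <= d ->
  (s + 1) * k + k * k * (exp u * S) <= s * (k * k).
Proof.
move=> s_ge0 k_gt0 x0_gt0 S_bd u_bd few_parts small_u.
have half_inv_x0 : 0 <= / x0 / 2.
  by apply: Rmult_le_pos; [apply/Rlt_le/Rinv_0_lt_compat |]; lra.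
have u_le : 2 * u * s <= d / x0 / 2.
  have := Rmult_le_compat_r _ _ _ half_inv_x0 small_u.
  have -> : 4 * s * x0 * u * (/ x0 / 2) = 2 * u * s by field; lra.
  by rewrite /Rdiv -Rmult_assoc.
have parts_le : s + 1 <= k * (d / x0) / 2.
  have := Rmult_le_compat_r _ _ _ half_inv_x0 few_parts.
  have -> : 2 * (s + 1) * x0 * (/ x0 / 2) = s + 1 by field; lra.
  by rewrite /Rdiv; lra.
have eu_S : exp u * S <= s - d / x0 / 2.
  have := Rmult_le_compat_r S _ _ (proj1 S_bd) (exp_le_1_add_2x u_bd).
  have d_x0 : 0 <= d / x0.
    by apply: Rmult_le_pos; [nra | apply/Rlt_le/Rinv_0_lt_compat].
  have : u * S <= u * s by apply: Rmult_le_compat_l; lra.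
  by lra.
have := Rmult_le_compat_l (k * k) _ _ ltac:(nra) eu_S.
have := Rmult_le_compat_l k _ _ ltac:(lra) parts_le.
by nra.
Qed.

Section Budget.

Variables (s k : nat) (eps Lam x0 l : R) (lam : nat -> R).
Hypotheses (eps_bd : 0 < eps < 1) (Lam_gt0 : 0 < Lam) (x0_ge1 : 1 <= x0).
Hypotheses (l_bd : 0 < l <= ln x0) (k_gt0 : (0 < k)%nat).
Hypothesis k_small : INR k * ln x0 <= (1 - eps) * Lam.
Hypothesis lam_ge0 : forall j, (j < s)%nat -> 0 <= lam j.
Hypothesis x0_root : INR s = / x0 + Rsum (fun j => exp (- (ln x0 * lam j / Lam))) s.

Let k_gt0R : 0 < INR k. Proof. exact/lt_0_INR/ltP. Qed.

Lemma sum_exp_neg_lam_le : Rsum (fun j => exp (- (lam j / INR k))) s <= INR s - / x0.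
Proof.
have -> : INR s - / x0 = Rsum (fun j => exp (- (ln x0 * lam j / Lam))) s by lra.
apply: Rsum_le => j lt_js; apply/exp_le/Ropp_le_contravar.
have ln_x0_k : ln x0 / Lam <= / INR k.
  apply: (Rmult_le_reg_r (INR k * Lam)); first by apply: Rmult_lt_0_compat.
  have -> : ln x0 / Lam * (INR k * Lam) = INR k * ln x0 by field; lra.
  have -> : / INR k * (INR k * Lam) = Lam by field; lra.
  by nra.
have := Rmult_le_compat_l _ _ _ (lam_ge0 lt_js) ln_x0_k.
by rewrite /Rdiv; lra.
Qed.

Lemma exp_neg_Lam_le : exp (- (Lam / INR k)) <= / x0 * exp (- (eps * l)).
Proof.
have x0_gt0 : 0 < x0 by lra.
rewrite -[/ x0](exp_ln _ (Rinv_0_lt_compat _ x0_gt0)) ln_Rinv //.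
rewrite -exp_plus; apply/exp_le.
suff : (1 + eps) * ln x0 <= Lam / INR k by nra.
apply: (Rmult_le_reg_r (INR k)) => //.
have -> : Lam / INR k * INR k = Lam by field; lra.
by nra.
Qed.

Lemma Rsum_exp_ge0 (f : nat -> R) m : 0 <= Rsum (fun i => exp (f i)) m.
Proof. by rewrite -(Rmult_0_r (INR m)) -Rsum_const; apply: Rsum_le => i _; apply/Rlt_le/exp_pos. Qed.

Lemma weights_budget (K : R) : 1 <= K -> lam s = Lam ->
  2 * INR s.+1 * x0 <= (1 - exp (- (eps * l))) * INR k ->
  4 * INR s * x0 * ln K <= (1 - exp (- (eps * l))) * INR k ->
  2 * ln K <= INR k ->
  INR s.+1 * INR k + INR (k * k) * Rsum (fun i => exp ((ln K - lam i) / INR k)) s.+1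
    <= INR s * INR (k * k).
Proof.
move=> K_ge1 lam_s few_parts small_lnK lnK_le.
have ln_K_ge0 : 0 <= ln K by rewrite -ln_1; apply: ln_le; lra.
set u := ln K / INR k; set S := Rsum (fun j => exp (- (lam j / INR k))) s + exp (- (Lam / INR k)).
have -> : Rsum (fun i => exp ((ln K - lam i) / INR k)) s.+1 = exp u * S.
  rewrite /= Rmult_plus_distr_l -Rsum_scal lam_s; congr (_ + _).
    by apply: Rsum_ext => i _; rewrite -exp_plus; congr exp; rewrite /u; field; lra.
  by rewrite -exp_plus; congr exp; rewrite /u; field; lra.
rewrite INR_muln S_INR; apply: (@budget_arith _ _ x0 (1 - exp (- (eps * l)))) => //.
- exact: pos_INR.
- lra.
- split; first by apply: Rplus_le_le_0_compat; [apply: Rsum_exp_ge0 | apply/Rlt_le/exp_pos].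
  have := sum_exp_neg_lam_le; have := exp_neg_Lam_le.
  by rewrite /S /Rdiv; lra.
- split; first by apply: Rmult_le_pos => //; apply/Rlt_le/Rinv_0_lt_compat.
  apply: (Rmult_le_reg_r (INR k)) => //; rewrite /u.
  have -> : ln K / INR k * INR k = ln K by field; lra.
  by lra.
- by rewrite -S_INR.
- apply: (Rmult_le_reg_r (INR k)) => //; rewrite /u.
  have -> : 4 * INR s * x0 * (ln K / INR k) * INR k = 4 * INR s * x0 * ln K.
    by field; lra.
  exact: small_lnK.
Qed.

End Budget.

Section Asymptotics.

Variables (s : nat) (eps l : R).
Hypotheses (s_ge1 : (1 <= s)%nat) (eps_bd : 0 < eps <= 1/2) (l_gt0 : 0 < l).

Let s_ge1R : 1 <= INR s. Proof. by apply: (le_INR 1); apply/leP. Qed.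
Let d := 1 - exp (- (eps * l)).
Let C := / (INR s * l) + 1.
Let C1 := ln C + 4.
Let C3 := ln (INR s.+1) + 2 * (ln 2 / l) + 16.
Let M := 2 * INR s.+1 * C + 4 * INR s * C * C3 + 2 * C3.

Let d_bd : 0 < d <= 1.
Proof.
have := exp_pos (- (eps * l)).
have : exp (- (eps * l)) < 1 by rewrite -exp_0; apply: exp_increasing; nra.
by rewrite /d; lra.
Qed.

Let C_ge1 : 1 <= C.
Proof.
have : 0 < / (INR s * l) by apply/Rinv_0_lt_compat/Rmult_lt_0_compat; lra.
by rewrite /C; lra.
Qed.

Let C1_gt0 : 0 < C1.
Proof.
have : 0 <= ln C by rewrite -ln_1; apply: ln_le; lra.
by rewrite /C1; lra.
Qed.

Let C3_ge16 : 16 <= C3.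
Proof.
have : 0 <= ln (INR s.+1) by rewrite -ln_1; apply: ln_le; rewrite ?S_INR; lra.
have : 0 < ln 2 / l by apply: Rdiv_lt_0_compat => //; have := ln_lt_2; lra.
by rewrite /C3; lra.
Qed.

Section FixedScale.

Variables (t x0 : R) (k : nat).
Hypotheses (t_ge1 : 1 <= t) (x0_ge1 : 1 <= x0) (l_le : l <= ln x0).
Hypothesis x0_le : x0 <= C * t ^ 4.
Hypothesis k_floor :
  INR k <= (1 - eps) * (ln 2 * t ^ 8) / ln x0 < INR k + 1.

Lemma ln_x0_le : ln x0 <= C1 * t.
Proof.
have ln_le_x0 : ln x0 <= ln (C * t ^ 4) by apply: ln_le; lra.
rewrite ln_mult ?ln_pow in ln_le_x0; [|lra|lra|apply: pow_lt; lra].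
rewrite (_ : INR 4 = 4) in ln_le_x0; last by rewrite /=; ring.
have := ln_le_sub1 (x := t) ltac:(lra).
have : 0 <= ln C by rewrite -ln_1; apply: ln_le; lra.
by rewrite /C1; nra.
Qed.

Let ln_x0_gt0 : 0 < ln x0. Proof. lra. Qed.

Lemma k_gt : ln 2 / (2 * C1) * t ^ 7 - 1 < INR k.
Proof.
suff : ln 2 / (2 * C1) * t ^ 7 <= (1 - eps) * (ln 2 * t ^ 8) / ln x0 by lra.
apply: (Rmult_le_reg_r (ln x0)) => //.
have -> : (1 - eps) * (ln 2 * t ^ 8) / ln x0 * ln x0 = (1 - eps) * ln 2 * t ^ 8.
  by field; lra.
have t7_ge0 : 0 <= ln 2 / (2 * C1) * t ^ 7.
  by apply: Rmult_le_pos; [apply/Rlt_le/Rdiv_lt_0_compat; have := ln_lt_2; lra | apply: pow_le; lra].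
apply: Rle_trans (Rmult_le_compat_l _ _ _ t7_ge0 ln_x0_le) _.
have -> : ln 2 / (2 * C1) * t ^ 7 * (C1 * t) = ln 2 / 2 * t ^ 8 by field; lra.
have : 0 <= ln 2 * t ^ 8 by apply: Rmult_le_pos; [have := ln_lt_2 | apply: pow_le]; lra.
by nra.
Qed.

Lemma k_le : INR k <= ln 2 / l * t ^ 8.
Proof.
apply: Rle_trans (proj1 k_floor) _.
have t8_ge0 : 0 <= ln 2 * t ^ 8 by apply: Rmult_le_pos; [have := ln_lt_2 | apply: pow_le]; lra.
apply: (Rmult_le_reg_r (l * ln x0)); first by apply: Rmult_lt_0_compat.
have -> : (1 - eps) * (ln 2 * t ^ 8) / ln x0 * (l * ln x0) = (1 - eps) * (ln 2 * t ^ 8) * l.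
  by field; lra.
have -> : ln 2 / l * t ^ 8 * (l * ln x0) = ln 2 * t ^ 8 * ln x0 by field; lra.
have := Rmult_le_compat_l _ _ _ t8_ge0 l_le.
have : 0 <= eps * (ln 2 * t ^ 8 * l) by apply: Rmult_le_pos; [|apply: Rmult_le_pos]; lra.
by lra.
Qed.

Lemma ln_K_le : (0 < k)%nat -> ln (INR s.+1 * INR (k * k)) <= C3 * t.
Proof.
move=> k_gt0; have k_ge1 : 1 <= INR k by apply: (le_INR 1); apply/leP.
have l2l_gt0 : 0 < ln 2 / l by apply: Rdiv_lt_0_compat => //; have := ln_lt_2; lra.
have ln_k : ln (INR k) <= ln 2 / l + 8 * t.
  have := ln_le (x := INR k) ltac:(lra) k_le.
  rewrite ln_mult ?ln_pow; [|lra|lra|apply: pow_lt; lra].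
  rewrite (_ : INR 8 = 8); last by rewrite /=; ring.
  have := ln_le_sub1 l2l_gt0; have := ln_le_sub1 (x := t) ltac:(lra).
  by lra.
have ln_s1_ge0 : 0 <= ln (INR s.+1) by rewrite -ln_1; apply: ln_le; rewrite ?S_INR; lra.
rewrite INR_muln !ln_mult; [|lra|lra|rewrite S_INR; lra|nra].
have : 0 <= ln (INR s.+1) * (t - 1) by apply: Rmult_le_pos; lra.
have : 0 <= ln 2 / l * (t - 1) by apply: Rmult_le_pos; lra.
by rewrite /C3; lra.
Qed.

Lemma conditions_of_dk : M * t ^ 5 <= d * INR k ->
  let K := INR s.+1 * INR (k * k) in
  (0 < k)%nat /\ 2 * INR s.+1 * x0 <= d * INR k /\
  4 * INR s * x0 * ln K <= d * INR k /\ 2 * ln K <= INR k.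
Proof.
move=> dk_ge K.
have := s_ge1R; have := C_ge1; have := C3_ge16; have := d_bd => d_bd' C3_ge C_ge s_ge.
have t4_ge1 : 1 <= t ^ 4 by rewrite -(pow1 4); apply: pow_incr; lra.
have t4_le : t ^ 4 <= t ^ 5 by rewrite [t ^ 5]/= -[t ^ 4]Rmult_1_l; apply: Rmult_le_compat_r; lra.
have t_le : t <= t ^ 5 by rewrite [t ^ 5]/=; nra.
have s1_ge2 : 2 <= INR s.+1 by rewrite S_INR; lra.
have M1 : 0 <= 2 * INR s.+1 * C * t ^ 5 by repeat apply: Rmult_le_pos; lra.
have M2 : 0 <= 4 * INR s * C * C3 * t ^ 5 by repeat apply: Rmult_le_pos; lra.
have M3 : 2 * C3 * t <= 2 * C3 * t ^ 5 by nra.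
have k_gt0 : (0 < k)%nat.
  apply/ltP/INR_lt; rewrite /=.
  by rewrite /M in dk_ge; nra.
have K_ge1 : 1 <= K.
  have : 1 <= INR k by apply: (le_INR 1); apply/leP.
  by rewrite /K INR_muln; nra.
have lnK_ge0 : 0 <= ln K by rewrite -ln_1; apply: ln_le; lra.
have lnK_le : ln K <= C3 * t := ln_K_le k_gt0.
have M_split : M * t ^ 5
    = 2 * INR s.+1 * C * t ^ 5 + 4 * INR s * C * C3 * t ^ 5 + 2 * C3 * t ^ 5.
  by rewrite /M; ring.
split=> //; split; [|split].
- have : x0 <= C * t ^ 5 by apply: Rle_trans x0_le (Rmult_le_compat_l _ _ _ _ t4_le); lra.
  by nra.
- have : 4 * INR s * x0 * ln K <= 4 * INR s * (C * t ^ 4) * (C3 * t).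
    by apply: Rmult_le_compat => //; nra.
  have -> : 4 * INR s * (C * t ^ 4) * (C3 * t) = 4 * INR s * C * C3 * t ^ 5.
    by rewrite [t ^ 5]/= [t ^ 4]/=; ring.
  by lra.
- have : d * INR k <= INR k by have := pos_INR k; nra.
  by lra.
Qed.

End FixedScale.

Lemma large_scale_conditions : exists T, 2 <= T /\ forall (t x0 : R) (k : nat),
  T <= t -> 1 <= x0 -> l <= ln x0 -> x0 <= C * t ^ 4 ->
  INR k <= (1 - eps) * (ln 2 * t ^ 8) / ln x0 < INR k + 1 ->
  let K := INR s.+1 * INR (k * k) in
  (0 < k)%nat /\ 2 * INR s.+1 * x0 <= d * INR k /\
  4 * INR s * x0 * ln K <= d * INR k /\ 2 * ln K <= INR k.
Proof.
have := s_ge1R; have := C_ge1; have := C1_gt0; have := C3_ge16 => C3_ge C1_gt C_ge s_ge.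
pose beta := ln 2 / (2 * C1).
have beta_gt0 : 0 < beta by apply: Rdiv_lt_0_compat; have := ln_lt_2; lra.
have M_ge0 : 0 <= M by rewrite /M S_INR; repeat apply: Rplus_le_le_0_compat;
  repeat apply: Rmult_le_pos; lra.
have dbeta_gt0 : 0 < d * beta by apply: Rmult_lt_0_compat => //; case: d_bd.
exists (2 + (M + d) / (d * beta)).
have T_ge0 : 0 <= (M + d) / (d * beta).
  by apply/Rlt_le/Rdiv_lt_0_compat => //; case: d_bd; lra.
split=> [|t x0 k t_ge x0_ge1 l_le x0_le k_floor]; first lra.
have t_ge1 : 1 <= t by lra.
apply: (@conditions_of_dk t) => //.
have dbeta_t : M + d <= d * beta * t.
  have le_t : (M + d) / (d * beta) <= t by lra.
  have := Rmult_le_compat_l _ _ _ (Rlt_le _ _ dbeta_gt0) le_t.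
  by have -> : d * beta * ((M + d) / (d * beta)) = M + d by field; lra.
have t5_ge1 : 1 <= t ^ 5 by rewrite -(pow1 5); apply: pow_incr; lra.
have t7 : d * beta * t ^ 7 = d * beta * t * t * t ^ 5 by rewrite /=; ring.
have := k_gt t_ge1 x0_ge1 l_le x0_le k_floor; rewrite -/beta => k_big.
have : d * (beta * t ^ 7 - 1) <= d * INR k by apply: Rmult_le_compat_l; lra.
have : (M + d) * t ^ 5 <= d * beta * t * t ^ 5 by apply: Rmult_le_compat_r; lra.
have : d * beta * t * t ^ 5 <= d * beta * t * t * t ^ 5.
  have : 0 <= d * beta * t * t ^ 5 by apply: Rmult_le_pos; [apply: Rmult_le_pos|]; lra.
  by nra.
by nra.
Qed.

End Asymptotics.

(* The threshold K = (s+1) k^2 exceeds ln ((s+1)^(k^2)), and n_i tau_i^k = K. *)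
Lemma chK_gt_of_exp_weights s (n : nat -> nat) k :
  (0 < k)%nat -> (forall i, (i <= s)%nat -> 0 < INR (n i)) ->
  let K := INR s.+1 * INR (k * k) in
  INR s.+1 * INR k + INR (k * k) * Rsum (fun i => exp ((ln K - ln (INR (n i))) / INR k)) s.+1
    <= INR s * INR (k * k) ->
  (k < chK s n)%nat.
Proof.
move=> k_gt0 n_gt0 K budget.
have k_gt0R : 0 < INR k by apply/lt_0_INR/ltP.
have s1_ge1 : 1 <= INR s.+1 by rewrite S_INR; have s_ge0 := pos_INR s; lra.
have kk_gt0 : 0 < INR (k * k) by rewrite INR_muln; apply: Rmult_lt_0_compat.
apply: (@chK_gt_of_weights _ _ _ (k * k) K _ _ _ _ budget); first by rewrite leq_pmulr.
- have s1_gt0 : 0 < INR s.+1 by lra.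
  rewrite -[INR s.+1](exp_ln _ s1_gt0) exp_pow_nat -exp_plus -exp_0.
  apply: exp_increasing; have := ln_le_sub1 s1_gt0.
  by rewrite /K; nra.
- move=> i le_is; split; first exact/Rlt_le/exp_pos.
  rewrite exp_pow_nat.
  have -> : INR k * ((ln K - ln (INR (n i))) / INR k) = ln K + - ln (INR (n i)) by field; lra.
  rewrite exp_plus exp_Ropp !exp_ln; [|exact: n_gt0|rewrite /K; nra].
  by right; field; have := n_gt0 i le_is; lra.
Qed.

Lemma floor_nat (v : R) : 0 <= v -> exists k : nat, INR k <= v < INR k + 1.
Proof.
move=> v_ge0; have floor_ge0 := Zfloor_lub 0 v v_ge0.
exists (Z.to_nat (Zfloor v)); rewrite INR_IZR_INZ Z2Nat.id //.
exact: Zfloor_bound.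
Qed.

Lemma ln_succ_div_gt0 s : (1 <= s)%nat -> 0 < ln (INR s.+1 / INR s).
Proof.
move=> s_ge1; have s_ge1R : 1 <= INR s by apply: (le_INR 1); apply/leP.
rewrite -ln_1; apply: ln_increasing; first lra.
apply: (Rmult_lt_reg_r (INR s)); first lra.
by rewrite /Rdiv Rmult_assoc Rinv_l ?S_INR; lra.
Qed.

Section Scale.

Variables (s : nat) (n : nat -> nat) (t x0 : R).
Hypotheses (s_ge1 : (1 <= s)%nat) (t_ge2 : 2 <= t) (x0_ge1 : 1 <= x0).
Hypothesis n_bd : forall j, (j <= s)%nat ->
  0 < INR (n j) /\ 2 * ln 2 * t ^ 4 <= ln (INR (n j)) <= ln (INR (n s)).
Hypothesis Lam_t : ln (INR (n s)) = ln 2 * t ^ 8.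
Hypothesis x0_root :
  INR s = / x0 + Rsum (fun j => exp (- (ln x0 * ln (INR (n j)) / ln (INR (n s))))) s.

Let s_ge1R : 1 <= INR s. Proof. by apply: (le_INR 1); apply/leP. Qed.
Let t8_eq : t ^ 8 = t ^ 4 * t ^ 4. Proof. by rewrite -pow_add. Qed.
Let t4_ge16 : 16 <= t ^ 4.
Proof. by rewrite (_ : 16 = 2 ^ 4); [apply: pow_incr | rewrite /=]; lra. Qed.
Let Lam_gt0 : 0 < ln (INR (n s)).
Proof. by rewrite Lam_t t8_eq; apply: Rmult_lt_0_compat; have := ln_lt_2; nra. Qed.

Lemma ln_x0_ge : ln (INR s.+1 / INR s) <= ln x0.
Proof.
apply: ln_le; first by apply: Rdiv_lt_0_compat; rewrite ?S_INR; lra.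
have := x0_lb Lam_gt0 x0_ge1 x0_root (fun j lt_js => proj2 (proj2 (n_bd (ltnW lt_js)))).
move=> x0_lb; apply: (Rmult_le_reg_r (INR s)); first lra.
by rewrite /Rdiv Rmult_assoc Rinv_l ?S_INR; lra.
Qed.

Lemma x0_le_scale : let l := ln (INR s.+1 / INR s) in x0 <= (/ (INR s * l) + 1) * t ^ 4.
Proof.
rewrite /=; set l := ln (INR s.+1 / INR s); have l_gt0 : 0 < l := ln_succ_div_gt0 s_ge1.
have Lam_le j : (j < s)%nat -> ln (INR (n s)) <= t ^ 4 / 2 * ln (INR (n j)).
  move=> lt_js; have [_ [lam_ge _]] := n_bd (ltnW lt_js).
  by rewrite Lam_t t8_eq; have := ln_lt_2; nra.
have := x0_ub s_ge1 Lam_gt0 x0_ge1 x0_root (K0 := t ^ 4 / 2) ltac:(lra)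
  (conj l_gt0 ln_x0_ge) Lam_le.
have : 0 <= / (INR s * l) by apply/Rlt_le/Rinv_0_lt_compat/Rmult_lt_0_compat; lra.
by nra.
Qed.

End Scale.

Lemma chK_gt_large_scale s eps : (1 <= s)%nat -> 0 < eps ->
  exists T, 2 <= T /\ forall (n : nat -> nat) (t x0 : R),
    T <= t ->
    (forall j, (j <= s)%nat ->
       0 < INR (n j) /\ 2 * ln 2 * t ^ 4 <= ln (INR (n j)) <= ln (INR (n s))) ->
    ln (INR (n s)) = ln 2 * t ^ 8 ->
    1 <= x0 ->
    INR s = / x0 + Rsum (fun j => exp (- (ln x0 * ln (INR (n j)) / ln (INR (n s))))) s ->
    (1 - eps) * (log2 (INR (n s)) / log2 x0) < INR (chK s n).
Proof.
move=> s_ge1 eps_gt0; pose e := Rmin eps (1/2).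
have e_bd : 0 < e <= 1/2 by split; [apply: Rmin_glb_lt; lra | apply: Rmin_r].
have l_gt0 := ln_succ_div_gt0 s_ge1.
have [T [T_ge2 large]] := large_scale_conditions s_ge1 e_bd l_gt0.
exists T; split=> // n t x0 t_ge n_bd Lam_t x0_ge1 root.
have t_ge2 := Rle_trans _ _ _ T_ge2 t_ge.
have l_le := ln_x0_ge s_ge1 t_ge2 x0_ge1 n_bd Lam_t root.
have x0_le := x0_le_scale s_ge1 t_ge2 x0_ge1 n_bd Lam_t root.
set Lam := ln (INR (n s)) in Lam_t root l_le x0_le *.
have ln2_gt0 := ln_lt_2.
have ln_x0_gt0 : 0 < ln x0 by lra.
have Lam_gt0 : 0 < Lam by rewrite Lam_t; apply: Rmult_lt_0_compat; [lra | apply: pow_lt; lra].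
have v_ge0 : 0 <= (1 - e) * (ln 2 * t ^ 8) / ln x0.
  by apply: Rmult_le_pos; [rewrite -Lam_t; nra | apply/Rlt_le/Rinv_0_lt_compat].
have [k k_floor] := floor_nat v_ge0.
have [k_gt0 [few_parts [small_lnK lnK_le]]] := large t x0 k t_ge x0_ge1 l_le x0_le k_floor.
rewrite -Lam_t in k_floor.
have k_small : INR k * ln x0 <= (1 - e) * Lam.
  have := Rmult_le_compat_r _ _ _ (Rlt_le _ _ ln_x0_gt0) (proj1 k_floor).
  by have -> : (1 - e) * Lam / ln x0 * ln x0 = (1 - e) * Lam by field; lra.
have lt_chK : (k < chK s n)%nat.
  apply: chK_gt_of_exp_weights => // [i /n_bd[] //|].
  have lam_ge0 j : (j < s)%nat -> 0 <= ln (INR (n j)).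
    by move=> /ltnW /n_bd [_ [lam_ge _]]; have := pow_le t 4; nra.
  have e_bd' : 0 < e < 1 by lra.
  apply: (weights_budget e_bd' Lam_gt0 x0_ge1 (conj l_gt0 l_le) k_gt0 k_small lam_ge0 root) => //.
  have : 1 <= INR k by apply: (le_INR 1); apply/leP.
  by rewrite INR_muln S_INR; have := pos_INR s; nra.
have := le_INR _ _ (elimT leP lt_chK); rewrite S_INR.
have -> : log2 (INR (n s)) / log2 x0 = Lam / ln x0 by rewrite /log2 -/Lam; field; lra.
have : (1 - eps) * (Lam / ln x0) <= (1 - e) * (Lam / ln x0).
  apply: Rmult_le_compat_r; last by rewrite /e; have := Rmin_l eps (1/2); lra.
  by apply/Rlt_le/Rdiv_lt_0_compat.
by rewrite /Rdiv in k_floor *; lra.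
Qed.

Lemma nondecreasing_upto s (n : nat -> nat) :
  (forall i, (i < s)%nat -> (n i <= n i.+1)%nat) ->
  forall i j, (i <= j <= s)%nat -> (n i <= n j)%nat.
Proof.
move=> n_step i j /andP[]; elim: j => [|j IH]; first by rewrite leqn0 => /eqP ->.
rewrite leq_eqVlt => /orP[/eqP -> // | lt_ij] lt_js.
exact: leq_trans (IH lt_ij (ltnW lt_js)) (n_step j lt_js).
Qed.


Lemma x0_root_exp s (k lam : nat -> R) (Lam x0 : R) : 0 < Lam -> 0 < x0 ->
  (forall j, (j < s)%nat -> 0 < lam j /\ k j = Lam / lam j) ->
  INR s * x0 - 1 - Rsum (fun j => Rpower x0 ((k j - 1) / k j)) s = 0 ->
  INR s = / x0 + Rsum (fun j => exp (- (ln x0 * lam j / Lam))) s.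
Proof.
move=> Lam_gt0 x0_gt0 k_def.
have -> : Rsum (fun j => Rpower x0 ((k j - 1) / k j)) s
    = x0 * Rsum (fun j => exp (- (ln x0 * lam j / Lam))) s.
  rewrite -Rsum_scal; apply: Rsum_ext => j /k_def[lam_gt0 ->]; rewrite /Rpower.
  have -> : (Lam / lam j - 1) / (Lam / lam j) * ln x0 = ln x0 + - (ln x0 * lam j / Lam).
    by field; lra.
  by rewrite exp_plus exp_ln.
move=> root; apply: (Rmult_eq_reg_r x0); last lra.
by rewrite Rmult_plus_distr_r Rinv_l; lra.
Qed.

Lemma le_sqrt_mul X Y Z : 0 <= X -> 0 <= Y -> 0 <= Z -> Z ^ 2 <= X * Y ^ 2 -> Z <= sqrt X * Y.
Proof.
move=> X_ge0 Y_ge0 Z_ge0 sq_le.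
rewrite -(sqrt_pow2 Y) // -sqrt_mult_alt // -(sqrt_pow2 Z) //.
exact: sqrt_le_1_alt.
Qed.

Lemma ln_Rpower_ge (L alpha : R) : 2 <= L ->
  alpha >= 2 * sqrt (L / log2 L) -> 2 * ln 2 * sqrt L <= ln (Rpower L alpha).
Proof.
move=> L_ge2 alpha_ge; rewrite ln_Rpower.
have ln2_gt0 := ln_lt_2.
have lnL_ge : ln 2 <= ln L by apply: ln_le; lra.
rewrite (_ : L / log2 L = L * ln 2 / ln L) in alpha_ge; last by rewrite /log2; field; lra.
have sqrt_le : ln 2 * sqrt L <= sqrt (L * ln 2 / ln L) * ln L.
  apply: le_sqrt_mul; try lra.
  - by apply: Rmult_le_pos; [nra | apply/Rlt_le/Rinv_0_lt_compat; lra].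
  - by apply: Rmult_le_pos; [lra | apply: sqrt_pos].
  - rewrite Rpow_mult_distr pow2_sqrt; last lra.
    have -> : L * ln 2 / ln L * ln L ^ 2 = L * ln 2 * ln L by field; lra.
    have : 0 <= L * ln 2 * (ln L - ln 2) by apply: Rmult_le_pos; [apply: Rmult_le_pos|]; lra.
    by rewrite /=; lra.
have := Rmult_le_compat_r _ _ _ (ltac:(lra) : 0 <= ln L) (Rge_le _ _ alpha_ge).
by lra.
Qed.

Lemma Rpower_inv8_pow8 L : 0 < L -> Rpower L (/ 8) ^ 8 = L.
Proof.
move=> L_gt0; rewrite -Rpower_pow ?Rpower_mult; last exact: exp_pos.
by rewrite (_ : / 8 * INR 8 = 1) ?Rpower_1 //; rewrite /=; field.
Qed.

Lemma le_Rpower_inv8 T L : 0 < T -> T ^ 8 <= L -> T <= Rpower L (/ 8).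
Proof.
move=> T_gt0 le_TL.
have inv8_ge0 : 0 <= / 8 by apply/Rlt_le/Rinv_0_lt_compat; lra.
have T8_gt0 : 0 < T ^ 8 by apply: pow_lt.
apply: (Rle_trans _ _ _ _ (Rle_Rpower_l _ _ _ inv8_ge0 (conj T8_gt0 le_TL))).
rewrite -(Rpower_pow 8 T T_gt0) Rpower_mult (_ : INR 8 * / 8 = 1) ?Rpower_1 //; first lra.
by rewrite /=; field.
Qed.

Local Close Scope R_scope.

Theorem theorem6 (s : nat) (hs : (1 <= s)%nat) (eps : R) (heps : (0 < eps)%R) :
  exists N : nat,
  forall n : nat -> nat,
    (2 <= n 0)%nat ->
    (forall i, (i < s)%nat -> (n i <= n i.+1)%nat) ->
    (N <= n s)%nat ->
    forall alpha : R,
      INR (n 0) = Rpower (log2 (INR (n s))) alpha ->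
      (alpha >= 2 * sqrt (log2 (INR (n s)) / log2 (log2 (INR (n s)))))%R ->
    let k := fun j : nat => (log2 (INR (n s)) / log2 (INR (n j)))%R in
    forall x0 : R,
      (1 <= x0)%R ->
      (INR s * x0 - 1 - Rsum (fun j => Rpower x0 ((k j - 1) / k j)) s = 0)%R ->
      ((1 - eps) * (log2 (INR (n s)) / log2 x0) <= INR (chK s n))%R.
Proof.
have [T [T_ge2 large]] := chK_gt_large_scale hs heps.
have [N N_gt] := INR_archimed 1 (exp (ln 2 * T ^ 8)) Rlt_0_1.
exists N => n n0_ge2 n_step ns_ge alpha n0_def alpha_ge k x0 x0_ge1 x0_eq.
have ln2_gt0 := ln_lt_2.
have n_ge2 j : (j <= s)%nat -> (2 <= INR (n j) <= INR (n s))%R.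
  move=> le_js; have le_0j : (n 0 <= n j)%nat by apply: (nondecreasing_upto n_step).
  have le_js' : (n j <= n s)%nat by apply: (nondecreasing_upto n_step); rewrite le_js leqnn.
  split; first by apply: (le_INR 2); apply/leP; apply: leq_trans le_0j.
  by apply/le_INR/leP.
have ln_n_ge j : (j <= s)%nat -> (ln 2 <= ln (INR (n j)))%R.
  by move/n_ge2=> [nj_ge2 _]; apply: ln_le; lra.
pose L := log2 (INR (n s)).
have Lam_L : ln (INR (n s)) = (ln 2 * L)%R by rewrite /L /log2; field; lra.
have T8_ge : (256 <= T ^ 8)%R by rewrite (_ : 256 = 2 ^ 8)%R; [apply: pow_incr | rewrite /=]; lra.
have L_ge : (T ^ 8 <= L)%R.
  have : (ln 2 * T ^ 8 <= ln (INR (n s)))%R.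
    rewrite -[(ln 2 * _)%R]ln_exp; apply: ln_le; first exact: exp_pos.
    by apply: Rle_trans (Rlt_le _ _ N_gt) _; rewrite Rmult_1_r; apply/le_INR/leP.
  by rewrite Lam_L; nra.
pose t := Rpower L (/ 8).
have t8 : (t ^ 8 = L)%R by apply: Rpower_inv8_pow8; lra.
have t4 : (t ^ 4 = sqrt L)%R.
  rewrite -t8 (_ : t ^ 8 = (t ^ 4) ^ 2)%R ?sqrt_pow2 //; last by rewrite -pow_mult.
  by apply: pow_le; apply/Rlt_le/exp_pos.
apply/Rlt_le/(large n t x0) => //.
- by apply: le_Rpower_inv8; lra.
- move=> j le_js; have [nj_ge2 nj_le] := n_ge2 j le_js; split; first lra.
  split; last by apply: ln_le; lra.
  apply: (Rle_trans _ (ln (INR (n 0)))).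
    by rewrite n0_def t4; apply: ln_Rpower_ge => //; lra.
  apply: ln_le; first by have := n_ge2 0%nat isT; lra.
  by apply/le_INR/leP/(nondecreasing_upto n_step); rewrite le_js.
- by rewrite t8 Lam_L.
- apply: x0_root_exp x0_eq; [have := ln_n_ge s (leqnn s); lra | lra |].
  move=> j /ltnW le_js; have := ln_n_ge j le_js; split; first lra.
  by rewrite /k /log2; field; lra.
Qed.
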